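(* Let $\mathcal C\subseteq\mathbb F_2^n$ be a binary linear code with error correcting capability $t$, $\prec$ an admissible order, and $(N,G)$ the output of Algorithm R for $\mathcal C$ and $<_e$. Let $w\in[X]$ and let $\mathrm{Can}(w,G)$ be an irreducible word obtained from $w$ by a finite sequence of one-step reductions modulo $G$. If $\mathrm{weight}(\psi(\mathrm{Can}(w,G)))\le t$, then $\psi(w)\in B(\mathcal C,t)$ and $\psi(\mathrm{Can}(w,G))$ is the error vector of $\psi(w)$, i.e. the unique $e\in\mathbb F_2^n$ with $\mathrm{weight}(e)\le t$ and $\psi(w)-e\in\mathcal C$. If $\mathrm{weight}(\psi(\mathrm{Can}(w,G)))>t$, then $\psi(w)$ contains more than $t$ errors, i.e. $\psi(w)\notin B(\mathcal C,t)$.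
   Context: Binary setting: $[X]$ is the free commutative monoid on $X=\{x_1,\dots,x_n\}$; $\psi(\prod x_i^{\beta_i})=(\beta_i\bmod 2)_i\in\mathbb F_2^n$; $\mathcal C$ has dimension $k$ and parity check matrix $H$ ($n\times(n-k)$, $\mathcal C=\{c:cH=0\}$); syndrome $\xi(w)=\psi(w)H$. Weight is Hamming weight, $d$ the minimum distance, $t=\lfloor(d-1)/2\rfloor$, and $B(\mathcal C,t)=\{y\in\mathbb F_2^n:\exists c\in\mathcal C,\ d(c,y)\le t\}$. $\mathrm{Ind}(w)=\{i:x_i\mid w\}$; error-vector order: $u<_e w$ iff $|\mathrm{Ind}(u)|<|\mathrm{Ind}(w)|$, or equality and $u\prec w$. Algorithm R: list $L$ sorted increasingly by $<_e$, set $N$, set $G$ of binomials; initially $L=(1)$, $N=G=\emptyset$. While $L\ne\emptyset$: remove the $<_e$-smallest $w$; if $w$ is divisible by the leading word of a binomial in $G$, discard it; otherwise if some $w'\in N$ has $\xi(w')=\xi(w)$, add $w-w'$ to $G$ with leading word $w$; else add $w$ to $N$ and insert all $wx$ ($x\in X$) into $L$. Output $(N,G)$. One-step reduction modulo $G$: a non-standard word (some exponent $\ge 2$) reduces to its standard form (exponents mod 2); a standard word $w=us$ with $u-u'\in G$ of leading word $u$ reduces to $u's$. Irreducible means no reduction applies. *)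

From mathcomp Require Import all_boot all_order all_algebra.
Set Implicit Arguments. Unset Strict Implicit. Unset Printing Implicit Defensive.
Import GRing.Theory.
Local Open Scope ring_scope.

(* A word prod x_i^(beta_i) is represented by its exponent vector beta. *)
Definition word (n : nat) := {ffun 'I_n -> nat}.

Definition wone n : word n := [ffun => 0%N].
Definition wmul n (u v : word n) : word n := [ffun i => (u i + v i)%N].
Definition wvar n (i : 'I_n) : word n := [ffun j => nat_of_bool (j == i)].
Definition wdvd n (u w : word n) : bool := [forall i, (u i <= w i)%N].
Definition Ind n (w : word n) : {set 'I_n} := [set i | (0 < w i)%N].
Definition wstandard n (w : word n) : bool := [forall i, (w i <= 1)%N].
Definition wstd n (w : word n) : word n := [ffun i => (w i %% 2)%N].

Definition psi n (w : word n) : 'rV['F_2]_n := \row_i ((w i %% 2)%N)%:R.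

Definition code n m (H : 'M['F_2]_(n, m)) : pred 'rV['F_2]_n :=
  [pred c | c *m H == 0].

Definition syndrome n m (H : 'M['F_2]_(n, m)) (w : word n) : 'rV['F_2]_m :=
  psi w *m H.

Definition wt n (v : 'rV['F_2]_n) : nat := #|[set i | v 0 i != 0]|.
Definition hdist n (u v : 'rV['F_2]_n) : nat := wt (u - v).

Definition is_min_distance n m (H : 'M['F_2]_(n, m)) (d : nat) : Prop :=
  (exists2 c, c \in code H & (c != 0) && (wt c == d)) /\
  (forall c, c \in code H -> c != 0 -> (d <= wt c)%N).

Definition in_ball n m (H : 'M['F_2]_(n, m)) (t : nat) (y : 'rV['F_2]_n) : Prop :=
  exists2 c, c \in code H & (hdist c y <= t)%N.

Definition admissible n (prec : rel (word n)) : Prop :=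
  [/\ (forall u, ~~ prec u u),
      (forall u v w, prec u v -> prec v w -> prec u w),
      (forall u v, u != v -> prec u v || prec v u),
      (forall u v w, prec u v -> prec (wmul u w) (wmul v w)) &
      (forall w, w != wone n -> prec (wone n) w)].

Definition lt_e n (prec : rel (word n)) (u w : word n) : bool :=
  (#|Ind u| < #|Ind w|)%N || ((#|Ind u| == #|Ind w|) && prec u w).

(* state: (L, N, G); a binomial lead - other is stored as the pair (lead, other) *)
Definition stateR n := (seq (word n) * seq (word n) * seq (word n * word n))%type.

Definition is_min_in n (prec : rel (word n)) (w : word n) (L : seq (word n)) :=
  (w \in L) && all (fun u => (u == w) || lt_e prec w u) L.

Inductive stepR n m (H : 'M['F_2]_(n, m)) (prec : rel (word n)) :
  stateR n -> stateR n -> Prop :=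
| stepR_discard L N G w :
    is_min_in prec w L -> has (fun g => wdvd g.1 w) G ->
    stepR H prec (L, N, G) (filter (predC1 w) L, N, G)
| stepR_binomial L N G w w' :
    is_min_in prec w L -> ~~ has (fun g => wdvd g.1 w) G ->
    w' \in N -> syndrome H w' = syndrome H w ->
    stepR H prec (L, N, G) (filter (predC1 w) L, N, rcons G (w, w'))
| stepR_new L N G w :
    is_min_in prec w L -> ~~ has (fun g => wdvd g.1 w) G ->
    ~~ has (fun w' => syndrome H w' == syndrome H w) N ->
    stepR H prec (L, N, G)
      (undup (filter (predC1 w) L ++ [seq wmul w (wvar i) | i <- enum 'I_n]),
       rcons N w, G).

Inductive star (A : Type) (R : A -> A -> Prop) : A -> A -> Prop :=
| star_refl a : star R a a
| star_step a b c : R a b -> star R b c -> star R a c.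

Definition algR_output n m (H : 'M['F_2]_(n, m)) (prec : rel (word n))
    (N : seq (word n)) (G : seq (word n * word n)) : Prop :=
  star (stepR H prec) ([:: wone n], [::], [::]) ([::], N, G).

Inductive red1 n (G : seq (word n * word n)) : word n -> word n -> Prop :=
| red1_std w : ~~ wstandard w -> red1 G w (wstd w)
| red1_bin u u' s : wstandard (wmul u s) -> (u, u') \in G ->
    red1 G (wmul u s) (wmul u' s).

Definition irreducible n (G : seq (word n * word n)) (w : word n) : Prop :=
  forall v, ~ red1 G w v.

Definition is_Can n (G : seq (word n * word n)) (w c : word n) : Prop :=
  star (red1 G) w c /\ irreducible G c.

From mathcomp Require Import all_boot all_order all_algebra.
From mathcomp Require Import zify.
Set Implicit Arguments. Unset Strict Implicit. Unset Printing Implicit Defensive.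
Import GRing.Theory.
Local Open Scope ring_scope.

(* Algorithm R keeps three invariants: N is syndrome-injective, every word of N
   is <_e-below every word of L, and every binomial (u, u') of G has u' in N,
   the syndrome of u and u' <_e u.  When L is exhausted, every standard word is
   in N or a multiple of a leading word of G.  So an irreducible word c is in N,
   and by well-founded induction along <_e every standard word with the syndrome
   of c is >=_e c: wt (psi c) is the least weight in the coset psi w + C, as
   reductions preserve the syndrome.  If it is at most t, the coset leader is
   unique by the minimum distance; if it exceeds t, psi w is farther than t
   from every codeword. *)

Lemma wf_finite_strict (T : finType) (r : rel T) :
  irreflexive r -> transitive r -> well_founded r.
Proof.
move=> irr tr x; have [k] := ubnP #|[pred y | r y x]|.
elim: k x => [|k IH] x; first by [].
rewrite ltnS => lt; constructor=> y ryx; apply: IH; apply: leq_trans lt.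
apply: proper_card; apply/properP; split.
  by apply/subsetP=> z /= rzy; exact: tr rzy ryx.
by exists y; rewrite !inE ?irr.
Qed.

Section Words.
Variable n : nat.
Implicit Types u v w s : word n.

Lemma wmulC u v : wmul u v = wmul v u.
Proof. by apply/ffunP=> i; rewrite !ffunE addnC. Qed.

Lemma wmul1w u : wmul (wone n) u = u.
Proof. by apply/ffunP=> i; rewrite !ffunE. Qed.

Lemma wdvd_refl u : wdvd u u.
Proof. exact/forallP. Qed.

Lemma wdvd_trans v u w : wdvd u v -> wdvd v w -> wdvd u w.
Proof.
by move=> /forallP uv /forallP vw; apply/forallP=> i; apply: leq_trans (uv i) (vw i).
Qed.

Lemma wdvd_mulr u v : wdvd u (wmul u v).
Proof. by apply/forallP=> i; rewrite ffunE leq_addr. Qed.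

Lemma wdvdP u w : wdvd u w -> exists s, w = wmul u s.
Proof.
move=> /forallP uw; exists [ffun i => (w i - u i)%N].
by apply/ffunP=> i; rewrite !ffunE subnKC.
Qed.

Lemma wstd_standard u : wstandard (wstd u).
Proof. by apply/forallP=> i; rewrite ffunE -ltnS ltn_mod. Qed.

Lemma wstd_id u : wstandard u -> wstd u = u.
Proof.
move=> /forallP st; apply/ffunP=> i; rewrite ffunE.
by move: (st i); case: (u i) => [|[]].
Qed.

Lemma Ind_wmul u v : Ind (wmul u v) = Ind u :|: Ind v.
Proof. by apply/setP=> i; rewrite !inE ffunE addn_gt0. Qed.

Lemma card_Ind_wmul u v : (#|Ind (wmul u v)| <= #|Ind u| + #|Ind v|)%N.
Proof. by rewrite Ind_wmul cardsU leq_subr. Qed.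

Lemma card_Ind_wmul_standard u v : wstandard (wmul u v) ->
  #|Ind (wmul u v)| = (#|Ind u| + #|Ind v|)%N.
Proof.
move=> /forallP st; rewrite Ind_wmul cardsU.
suff -> : Ind u :&: Ind v = set0 by rewrite cards0 subn0.
apply/setP=> i; rewrite !inE; move: (st i); rewrite ffunE.
by case: (u i) => [|[|]] //; case: (v i).
Qed.

Lemma Ind_eq0 u : Ind u = set0 -> u = wone n.
Proof.
move=> /setP u0; apply/ffunP=> i; move: (u0 i); rewrite !inE ffunE.
by case: (u i).
Qed.

Lemma wstandard_wvar u : wstandard u -> Ind u != set0 ->
  exists i u', [/\ u = wmul u' (wvar i), wstandard u' & (#|Ind u'| < #|Ind u|)%N].
Proof.
move=> /forallP st /set0Pn[i ui].
exists i, [ffun j => if j == i then 0%N else u j]; split.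
- apply/ffunP=> j; rewrite !ffunE; case: eqP => [->|]; last by rewrite addn0.
  by move: ui (st i); rewrite inE; case: (u i) => [|[]].
- by apply/forallP=> j; rewrite ffunE; case: eqP.
- rewrite [X in (_ < X)%N](cardsD1 i) ui ltnS subset_leq_card //.
  by apply/subsetP=> j; rewrite !inE ffunE; case: eqP.
Qed.

End Words.

Section Vectors.
Variable n : nat.
Implicit Types (u v : word n) (a b e : 'rV['F_2]_n).

Lemma psi_wmul u v : psi (wmul u v) = psi u + psi v.
Proof. by apply/rowP=> i; rewrite !mxE !ffunE !Fp_nat_mod // natrD. Qed.

Lemma psi_wstd u : psi (wstd u) = psi u.
Proof. by apply/rowP=> i; rewrite !mxE !ffunE modn_mod. Qed.

Definition word_of_row e : word n := [ffun i => nat_of_bool (e 0 i != 0)].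

Lemma word_of_row_standard e : wstandard (word_of_row e).
Proof. by apply/forallP=> i; rewrite ffunE; case: (e 0 i != 0). Qed.

Lemma psi_word_of_row e : psi (word_of_row e) = e.
Proof.
apply/rowP=> i; rewrite !mxE ffunE.
by case: (e 0 i) => [[|[|k]] lt2] //=; apply: val_inj.
Qed.

Lemma word_of_row_psi u : wstandard u -> word_of_row (psi u) = u.
Proof.
move=> /forallP st; apply/ffunP=> i; rewrite !ffunE mxE.
by move: (st i); case: (u i) => [|[]].
Qed.

Lemma wt_word_of_row e : wt e = #|Ind (word_of_row e)|.
Proof. by apply: eq_card => i; rewrite !inE ffunE; case: (e 0 i != 0). Qed.

Lemma wt_psi_le u : (wt (psi u) <= #|Ind u|)%N.
Proof.
by apply: subset_leq_card; apply/subsetP=> i; rewrite !inE mxE; case: (u i).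
Qed.

Lemma wtN a : wt (- a) = wt a.
Proof. by apply: eq_card => i; rewrite !inE mxE oppr_eq0. Qed.

Lemma wtB_le a b : (wt (a - b) <= wt a + wt b)%N.
Proof.
apply: leq_trans (leq_card_setU _ _); apply: subset_leq_card.
apply/subsetP=> i; rewrite !inE !mxE -negb_and; apply: contra => /andP[/eqP-> /eqP->].
by rewrite subrr.
Qed.

Lemma wt_gt0 a : a != 0 -> (0 < wt a)%N.
Proof.
move=> a0; rewrite card_gt0; apply/set0Pn; apply/existsP; apply: contraNT a0.
by move=> /existsPn a0; apply/eqP/rowP=> i; move: (a0 i); rewrite inE mxE negbK => /eqP.
Qed.

End Vectors.

Section ErrorVectorOrder.
Variables (n : nat) (prec : rel (word n)).
Hypothesis adm : admissible prec.
Implicit Types u v w x y s : word n.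
Local Notation "u <e v" := (lt_e prec u v) (at level 70).

Lemma lt_e_irr : irreflexive (lt_e prec).
Proof. by case: adm => irr _ _ _ _ u; rewrite /lt_e ltnn eqxx (negbTE (irr u)). Qed.

Lemma lt_e_trans v u w : u <e v -> v <e w -> u <e w.
Proof.
case: adm => _ tr _ _ _; rewrite /lt_e.
case/orP=> [lt1|/andP[/eqP e1 p1]]; case/orP=> [lt2|/andP[/eqP e2 p2]].
- by rewrite (ltn_trans lt1 lt2).
- by rewrite -e2 lt1.
- by rewrite e1 lt2.
- by rewrite e1 e2 eqxx (tr _ _ _ p1 p2) orbT.
Qed.

Lemma lt_e_wmulr x y : y != wone n -> x <e wmul x y.
Proof.
case: adm => _ _ _ mono one ny; rewrite /lt_e.
have -> : prec x (wmul x y) by rewrite wmulC -{1}(wmul1w x) mono ?one.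
have : (#|Ind x| <= #|Ind (wmul x y)|)%N by rewrite Ind_wmul subset_leq_card ?subsetUl.
by rewrite leq_eqVlt => /orP[/eqP->|->]; rewrite ?eqxx ?orbT.
Qed.

Lemma lt_e_wstd x : ~~ wstandard x -> wstd x <e x.
Proof.
move=> /forallPn[i xi]; rewrite -ltnNge in xi.
set y : word n := [ffun j => (x j - x j %% 2)%N].
have {2}-> : x = wmul (wstd x) y by apply/ffunP=> j; rewrite !ffunE subnKC ?leq_mod.
apply: lt_e_wmulr; apply/eqP=> /ffunP/(_ i); rewrite !ffunE => /eqP.
by rewrite subn_eq0 => /(leq_trans xi); rewrite ltnNge -ltnS ltn_mod.
Qed.

Lemma lt_e_wmul2r u' u s : u' <e u -> wstandard (wmul u s) -> wmul u' s <e wmul u s.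
Proof.
case: adm => _ _ _ mono _; rewrite /lt_e => lt st.
have := card_Ind_wmul u' s; rewrite (card_Ind_wmul_standard st).
case/orP: lt => [lt|/andP[/eqP-> p]] le.
  by rewrite (leq_ltn_trans le) // ltn_add2r.
by move: le; rewrite leq_eqVlt => /orP[/eqP->|->]; rewrite ?eqxx ?mono ?orbT.
Qed.

Lemma lt_e_reduce u' u s : u' <e u -> wstandard (wmul u s) ->
  wstd (wmul u' s) <e wmul u s.
Proof.
move=> lt st; have lt_s := lt_e_wmul2r lt st.
have [std|nstd] := boolP (wstandard (wmul u' s)); first by rewrite wstd_id.
exact: lt_e_trans (lt_e_wstd nstd) lt_s.
Qed.

End ErrorVectorOrder.

Lemma star_inv (A : Type) (R : A -> A -> Prop) (P : A -> Prop) :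
  (forall a b, R a b -> P a -> P b) -> forall a b, star R a b -> P a -> P b.
Proof. by move=> step a b; elim=> // a1 a2 a3 r _ IH /(step _ _ r). Qed.

Lemma star_inv_back (A : Type) (R : A -> A -> Prop) (P : A -> Prop) :
  (forall a b, R a b -> P b -> P a) -> forall a b, star R a b -> P b -> P a.
Proof. by move=> step a b; elim=> // a1 a2 a3 r _ IH /IH; apply: step r. Qed.

Section Reduction.
Variables n m : nat.
Variable H : 'M['F_2]_(n, m).
Implicit Types (u w c : word n) (G : seq (word n * word n)).

Definition lead_multiple G w := has (fun g => wdvd g.1 w) G.

Lemma lead_multiple_dvd G u w : lead_multiple G u -> wdvd u w -> lead_multiple G w.
Proof.
by move=> /hasP[g gG gu] uw; apply/hasP; exists g; last exact: wdvd_trans uw.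
Qed.

Lemma irreducible_standard G c : irreducible G c -> wstandard c.
Proof. by move=> irr; apply/negPn/negP=> /(red1_std G)/irr. Qed.

Lemma irreducible_lead_multiple G c : irreducible G c -> ~~ lead_multiple G c.
Proof.
move=> irr; apply/hasP=> -[[u u'] gG /wdvdP[s cE]].
apply: (irr (wmul u' s)); rewrite cE; apply: red1_bin => //.
by rewrite -cE (irreducible_standard irr).
Qed.

Lemma syndrome_wmul u w : syndrome H (wmul u w) = syndrome H u + syndrome H w.
Proof. by rewrite /syndrome psi_wmul mulmxDl. Qed.

Lemma syndrome_wstd w : syndrome H (wstd w) = syndrome H w.
Proof. by rewrite /syndrome psi_wstd. Qed.

Lemma syndrome_red G w c :
  (forall g, g \in G -> syndrome H g.2 = syndrome H g.1) ->
  star (red1 G) w c -> syndrome H w = syndrome H c.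
Proof.
move=> Gsyn; elim=> // a b c' [x _|u u' s _ /Gsyn /= uu'] _ <-.
  by rewrite syndrome_wstd.
by rewrite !syndrome_wmul uu'.
Qed.

Lemma code_subr (a b : 'rV_n) : (a - b \in code H) = (a *m H == b *m H).
Proof. by rewrite inE mulmxBl subr_eq0. Qed.

Lemma unique_decoding d (e1 e2 : 'rV_n) :
  (forall c : 'rV_n, c \in code H -> c != 0 -> (d <= wt c)%N) ->
  (wt e1 <= (d.-1)./2)%N -> (wt e2 <= (d.-1)./2)%N -> e1 - e2 \in code H ->
  e1 = e2.
Proof.
move=> dmin wt1 wt2 e12; apply/eqP; rewrite -subr_eq0; apply: contraT => nz.
have := dmin _ e12 nz; have := wt_gt0 nz; have := wtB_le e1 e2.
move: (wt (e1 - e2)) (d.-1./2) wt1 wt2 (odd_double_half d.-1) => k h.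
by rewrite -addnn -subn1; case: (odd _); lia.
Qed.

End Reduction.

Section AlgorithmR.
Variables (n m : nat) (H : 'M['F_2]_(n, m)) (prec : rel (word n)).
Hypothesis adm : admissible prec.
Local Notation "u <e v" := (lt_e prec u v) (at level 70).
Local Notation syn := (syndrome H).

Lemma is_min_in_lt w L b : is_min_in prec w L -> b \in L -> b != w -> w <e b.
Proof. by case/andP=> _ /allP minw /minw /orP[->|]. Qed.

Definition algR_inv (S : stateR n) := let: (L, N, G) := S in
  [/\ forall a b, a \in N -> b \in L -> a <e b,
      {in N &, injective syn} &
      forall g, g \in G -> [/\ g.2 \in N, syn g.2 = syn g.1 & g.2 <e g.1]].

Lemma algR_inv_step S S' : stepR H prec S S' -> algR_inv S -> algR_inv S'.
Proof.
case=> {S S'} [L N G w minw _|L N G w w' minw _ w'N sw'|L N G w minw _ newsyn]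
  [NL Ninj GN].
- by split=> // a b aN; rewrite mem_filter => /andP[_ /(NL _ _ aN)].
- split=> // [a b aN|g]; first by rewrite mem_filter => /andP[_ /(NL _ _ aN)].
  rewrite mem_rcons inE => /predU1P[->|/GN //]; split=> //=.
  by apply: NL _ _ w'N _; case/andP: minw.
- have wL : w \in L by case/andP: minw.
  have w_succ i : w <e wmul w (wvar i).
    by apply: (lt_e_wmulr adm); apply/eqP=> /ffunP/(_ i); rewrite !ffunE eqxx.
  split.
  + move=> a b; rewrite mem_rcons inE mem_undup mem_cat mem_filter.
    case/predU1P=> [->|aN] /orP[/andP[/= bw bL]|/mapP[i _ ->]].
    * exact: is_min_in_lt minw bL bw.
    * exact: w_succ.
    * exact: NL.
    * exact (lt_e_trans adm (NL _ _ aN wL) (w_succ i)).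
  + have synw a : a \in N -> syn a != syn w.
      by move=> aN; apply: contra newsyn => /eqP sa; apply/hasP; exists a; rewrite ?sa.
    move=> a b; rewrite !mem_rcons !inE.
    case/predU1P=> [->|aN] /predU1P[->|bN] // sab.
    * by have := synw _ bN; rewrite sab eqxx.
    * by have := synw _ aN; rewrite sab eqxx.
    * exact: Ninj.
  + by move=> g /GN[g2N ? ?]; rewrite mem_rcons inE g2N orbT.
Qed.

Section Output.
Variables (Nf : seq (word n)) (Gf : seq (word n * word n)).
Hypothesis out : algR_output H prec Nf Gf.

Lemma algR_output_inv : algR_inv ([::], Nf, Gf).
Proof. by apply: star_inv algR_inv_step _ _ out _; split. Qed.

Let covered x := x \in Nf \/ lead_multiple Gf x.

(* It holds at the final state, where L is empty and N = Nf, and is pulled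
   back along the run to the initial state. *)
Definition algR_back (S : stateR n) := let: (L, N, G) := S in
  [/\ {subset N <= Nf}, {subset G <= Gf}, {in L, forall x, covered x} &
      forall x, x \in Nf -> x \notin N -> forall i, covered (wmul x (wvar i))].

Lemma algR_back_step S S' : stepR H prec S S' -> algR_back S' -> algR_back S.
Proof.
case=> {S S'} [L N G w minw wG|L N G w w' minw _ _ _|L N G w minw _ _]
  [NNf GGf Lcov Ncov].
- split=> // x xL; have [->|xw] := eqVneq x w.
    by right; case/hasP: wG => g /GGf gG gw; apply/hasP; exists g.
  by apply: Lcov; rewrite mem_filter /= xw.
- have wGf : (w, w') \in Gf by apply: GGf; rewrite mem_rcons mem_head.
  split=> // [g gG|x xL]; first by apply: GGf; rewrite mem_rcons inE gG orbT.
  have [->|xw] := eqVneq x w; last by apply: Lcov; rewrite mem_filter /= xw.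
  by right; apply/hasP; exists (w, w'); rewrite //= wdvd_refl.
- split=> [x xN|//|x xL|x xNf xN i].
  + by apply: NNf; rewrite mem_rcons inE xN orbT.
  + have [->|xw] := eqVneq x w; first by left; apply: NNf; rewrite mem_rcons mem_head.
    by apply: Lcov; rewrite mem_undup mem_cat mem_filter /= xw xL.
  + have [->|xw] := eqVneq x w.
      apply: Lcov; rewrite mem_undup mem_cat; apply/orP; right.
      by apply: map_f; rewrite mem_enum.
    by apply: Ncov; rewrite // mem_rcons inE negb_or xw.
Qed.

Lemma algR_back_init : algR_back ([:: wone n], [::], [::]).
Proof. by apply: star_inv_back algR_back_step _ _ out _; split=> // x ->. Qed.

Lemma standard_covered c : wstandard c -> covered c.
Proof.
have [_ _ cov1 covN] := algR_back_init.
have [k] := ubnP #|Ind c|; elim: k c => // k IH c.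
have [c0 _ _|c0 /ltnSE ltk stc] := eqVneq (Ind c) set0.
  by rewrite (Ind_eq0 c0); apply: cov1; rewrite mem_head.
have [i [c' [cE stc' ltc']]] := wstandard_wvar stc c0.
rewrite cE; case: (IH c' (leq_trans ltc' ltk) stc') => [c'N|c'G]; first exact: covN.
by right; apply: lead_multiple_dvd c'G (wdvd_mulr _ _).
Qed.

Lemma irreducible_in_N c : irreducible Gf c -> c \in Nf.
Proof.
move=> irr; have [//|cG] := standard_covered (irreducible_standard irr).
by move: (irreducible_lead_multiple irr); rewrite cG.
Qed.

Lemma syndrome_Can w c : star (red1 Gf) w c -> syn w = syn c.
Proof. by have [_ _ GN] := algR_output_inv; apply: syndrome_red => g /GN[]. Qed.

(* Standard words are the word_of_row e, so <_e is well founded on them.  A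
   standard word outside N is a multiple u s of a leading word, and reducing it
   by (u, u') gives a <_e-smaller standard word of the same syndrome. *)
Lemma N_lt_e_min c v : c \in Nf -> wstandard v -> syn v = syn c -> c = v \/ c <e v.
Proof.
have [_ Ninj GN] := algR_output_inv; move=> cN stv; rewrite -(word_of_row_psi stv).
have wf : well_founded (fun a b => word_of_row a <e word_of_row b).
  by apply: wf_finite_strict => [a|b a e]; [exact: lt_e_irr | exact: lt_e_trans].
elim/(well_founded_ind wf): (psi v) => e IH syne.
have [eN|] := standard_covered (word_of_row_standard e); first by left; apply: Ninj.
case/hasP=> -[u u'] /GN[_ /= synu lt] /wdvdP[s eE].
have st : wstandard (wmul u s) by rewrite -eE word_of_row_standard.
have lt_red : wstd (wmul u' s) <e word_of_row e by rewrite eE lt_e_reduce.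
have syn_red : syn (wstd (wmul u' s)) = syn c.
  by rewrite syndrome_wstd syndrome_wmul synu -syndrome_wmul -eE.
have := IH (psi (wstd (wmul u' s))); rewrite word_of_row_psi ?wstd_standard //.
case/(_ lt_red syn_red) => [->|lt_c]; right => //; exact: lt_e_trans lt_c lt_red.
Qed.

Lemma wt_psi_N_le c e : c \in Nf -> e *m H = psi c *m H -> (wt (psi c) <= wt e)%N.
Proof.
move=> cN syne; apply: leq_trans (wt_psi_le c) _; rewrite wt_word_of_row.
have syn_e : syn (word_of_row e) = syn c by rewrite /syndrome psi_word_of_row.
have [->//|] := N_lt_e_min cN (word_of_row_standard e) syn_e.
by rewrite /lt_e => /orP[/ltnW|/andP[/eqP-> _]].
Qed.

End Output.
End AlgorithmR.

Unset Implicit Arguments.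

Theorem theorem5p1 (n m : nat) (H : 'M['F_2]_(n, m)) (d : nat)
    (prec : rel (word n)) (N : seq (word n)) (G : seq (word n * word n))
    (w c : word n) :
  is_min_distance H d -> admissible prec -> algR_output H prec N G ->
  is_Can G w c ->
  let t := (d.-1)./2 in
  ((wt (psi c) <= t)%N ->
     in_ball H t (psi w) /\
     (psi w - psi c \in code H) /\
     (forall e : 'rV['F_2]_n, (wt e <= t)%N -> psi w - e \in code H -> e = psi c)) /\
  ((t < wt (psi c))%N -> ~ in_ball H t (psi w)).
Proof.
move=> [_ dmin] adm out [red irr] t.
have cN : c \in N := irreducible_in_N out irr.
have syn_wc : psi w *m H = psi c *m H := syndrome_Can adm out red.
have wcC : psi w - psi c \in code H by rewrite code_subr syn_wc.
split=> [ct | ct [c0 c0C] wt_e].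
  split; first by exists (psi w - psi c); rewrite // /hdist addrAC subrr add0r wtN.
  split=> // e et ewC; apply: unique_decoding dmin et ct _.
  by move: ewC wcC; rewrite !code_subr => /eqP <- /eqP ->.
suff: (wt (psi c) <= t)%N by rewrite leqNgt ct.
apply: leq_trans wt_e; rewrite /hdist -opprB wtN; apply (wt_psi_N_le adm out cN).
by move: c0C; rewrite inE mulmxBl => /eqP->; rewrite subr0.
Qed.
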